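(* Let $A$ be an Archimedean semiprime $f$-algebra with a multiplicative unit $e$. Then $A$ is bounded quasi-inversion closed if and only if $A$ is bounded inversion closed.
   Context: An $f$-algebra is a real associative algebra that is a vector lattice with $A_+A_+\subseteq A_+$ and such that $a\wedge b=0$ implies $ac\wedge b=ca\wedge b=0$ for all $c\in A_+$; it is semiprime if $0$ is its only nilpotent element. An element $a\in A$ is quasi-invertible if there is $a^\ast\in A$ with $a+a^\ast=aa^\ast$; $Q(A)$ denotes the set of such elements. $A$ is bounded quasi-inversion closed if for every $a\in A$, $|a|\le|a^2-a|$ implies $a\in Q(A)$. A unital $A$ is bounded inversion closed if every $a\in A$ with $e\le a$ has a multiplicative inverse in $A$. *)

From HB Require Import structures.
From mathcomp Require Import all_boot all_order all_algebra.
From mathcomp Require Import reals.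
Set Implicit Arguments. Unset Strict Implicit. Unset Printing Implicit Defensive.
Import Order.TTheory GRing.Theory Num.Theory.
Local Open Scope ring_scope.

Section FAlgebra.
Variables (R : realType) (A : lmodType R).
Variables (mul : A -> A -> A) (le : rel A) (join : A -> A -> A).

Definition real_assoc_algebra : Prop :=
  [/\ forall x y z, mul x (mul y z) = mul (mul x y) z,
      forall (c : R) x y z, mul (c *: x + y) z = c *: mul x z + mul y z &
      forall (c : R) x y z, mul z (c *: x + y) = c *: mul z x + mul z y].

Definition ordered_vector_space : Prop :=
  [/\ forall x, le x x,
      forall x y, le x y -> le y x -> x = y,
      forall x y z, le x y -> le y z -> le x z,
      forall x y z, le x y -> le (x + z) (y + z) &
      forall (c : R) x y, 0 <= c -> le x y -> le (c *: x) (c *: y)].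

Definition is_join_op : Prop :=
  forall x y, [/\ le x (join x y), le y (join x y) &
                  forall z, le x z -> le y z -> le (join x y) z].

Definition vector_lattice : Prop := ordered_vector_space /\ is_join_op.

Definition meet (x y : A) : A := - join (- x) (- y).
Definition absv (x : A) : A := join x (- x).
Definition positive (x : A) : Prop := le 0 x.

Definition f_algebra : Prop :=
  [/\ real_assoc_algebra, vector_lattice,
      (forall a b, positive a -> positive b -> positive (mul a b)) &
      (forall a b c, meet a b = 0 -> positive c ->
          meet (mul a c) b = 0 /\ meet (mul c a) b = 0)].

(* a ^ (n+1) in the algebra *)
Fixpoint mpow (a : A) (n : nat) : A :=
  match n with O => a | S k => mul a (mpow a k) end.

Definition nilpotent (a : A) : Prop := exists n, mpow a n = 0.
Definition semiprime : Prop := forall a, nilpotent a -> a = 0.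

Definition archimedean : Prop :=
  forall x y, positive x -> (forall n : nat, le (n%:R *: x) y) -> x = 0.

Definition is_mul_unit (e : A) : Prop := forall a, mul e a = a /\ mul a e = a.

Definition quasi_invertible (a : A) : Prop := exists b, a + b = mul a b.

Definition bounded_quasi_inversion_closed : Prop :=
  forall a, le (absv a) (absv (mul a a - a)) -> quasi_invertible a.

Definition bounded_inversion_closed (e : A) : Prop :=
  forall a, le e a -> exists b, mul a b = e /\ mul b a = e.

End FAlgebra.

From Pilot Require Import Defs.
From HB Require Import structures.
From mathcomp Require Import all_boot all_order all_algebra.
From mathcomp Require Import reals.
Set Implicit Arguments. Unset Strict Implicit. Unset Printing Implicit Defensive.
Import Order.TTheory GRing.Theory Num.Theory.
Local Open Scope ring_scope.

(* Both directions rest on the identity a + b = ab <-> (e - a)(e - b) = e,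
   which identifies quasi-inverses of a with right inverses of e - a.
   If e <= a, then c := e - a = -(a - e) satisfies |c| <= |c^2 - c|, so
   a = e - c has a right inverse r; the idempotent q := e - ra is then
   positive with aq = 0, and 0 <= (a - e)q = -q forces q = 0.
   Conversely, if |a| <= |a^2 - a| = |a| |e - a|, put u := |e - a| - e.
   Then |a|u >= 0, which in an f-algebra forces |a|u^- = 0, hence au^- = 0,
   |e - a|u^- = u^- and uu^- = -(u^-)^2 = 0; semiprimeness gives u^- = 0,
   i.e. e <= |e - a|.  An inverse s of |e - a| yields the right inverse
   (e - a)s^2 of e - a, because (e - a)^2 = |e - a|^2. *)

Section FAlgebraTheory.
Variables (R : realType) (A : lmodType R).
Variables (mul : A -> A -> A) (le : rel A) (join : A -> A -> A).

Hypothesis mul_linearl :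
  forall (c : R) x y z, mul (c *: x + y) z = c *: mul x z + mul y z.
Hypothesis mul_linearr :
  forall (c : R) x y z, mul z (c *: x + y) = c *: mul z x + mul z y.

Lemma mulDl x y z : mul (x + y) z = mul x z + mul y z.
Proof. by have := mul_linearl 1 x y z; rewrite !scale1r. Qed.

Lemma mulDr x y z : mul z (x + y) = mul z x + mul z y.
Proof. by have := mul_linearr 1 x y z; rewrite !scale1r. Qed.

Lemma mul0l z : mul 0 z = 0.
Proof. by apply: (@addrI _ (mul 0 z)); rewrite -mulDl !addr0. Qed.

Lemma mul0r z : mul z 0 = 0.
Proof. by apply: (@addrI _ (mul z 0)); rewrite -mulDr !addr0. Qed.

Lemma mulNl x z : mul (- x) z = - mul x z.
Proof. by apply: (@addrI _ (mul x z)); rewrite -mulDl !subrr mul0l. Qed.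

Lemma mulNr x z : mul z (- x) = - mul z x.
Proof. by apply: (@addrI _ (mul z x)); rewrite -mulDr !subrr mul0r. Qed.

Lemma mulBl x y z : mul (x - y) z = mul x z - mul y z.
Proof. by rewrite mulDl mulNl. Qed.

Lemma mulBr x y z : mul z (x - y) = mul z x - mul z y.
Proof. by rewrite mulDr mulNr. Qed.

Hypothesis lexx : forall x, le x x.
Hypothesis le_anti : forall x y, le x y -> le y x -> x = y.
Hypothesis le_trans : forall x y z, le x y -> le y z -> le x z.
Hypothesis lerD2r : forall x y z, le x y -> le (x + z) (y + z).
Hypothesis lerZ2l : forall (c : R) x y, 0 <= c -> le x y -> le (c *: x) (c *: y).
Hypothesis joinP : is_join_op le join.

Local Notation meet := (meet join).
Local Notation absv := (absv join).
Local Notation "a ⊥ b" := (meet a b = 0) (at level 70).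

Lemma subr_ge0 x y : le 0 (y - x) <-> le x y.
Proof.
split=> h; last by have := lerD2r (- x) h; rewrite subrr.
by have := lerD2r x h; rewrite add0r subrK.
Qed.

Lemma lerN2 x y : le x y -> le (- y) (- x).
Proof. by move=> /subr_ge0 h; apply/subr_ge0; rewrite opprK addrC. Qed.

Lemma lerD x y z w : le x y -> le z w -> le (x + z) (y + w).
Proof.
move=> hxy hzw; apply: le_trans (lerD2r z hxy) _.
by rewrite ![y + _]addrC; apply: lerD2r.
Qed.

Lemma addr_ge0 x y : le 0 x -> le 0 y -> le 0 (x + y).
Proof. by move=> hx hy; have := lerD hx hy; rewrite addr0. Qed.

Lemma join_gel x y : le x (join x y). Proof. by case: (joinP x y). Qed.
Lemma join_ger x y : le y (join x y). Proof. by case: (joinP x y). Qed.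
Lemma join_le x y z : le x z -> le y z -> le (join x y) z.
Proof. by case: (joinP x y) => _ _; apply. Qed.

Lemma joinC x y : join x y = join y x.
Proof. by apply: le_anti; apply: join_le; rewrite ?join_gel ?join_ger. Qed.

Lemma join_idPr x y : le x y -> join x y = y.
Proof. by move=> hxy; apply: le_anti; [apply: join_le hxy (lexx y) | apply: join_ger]. Qed.

Lemma joinDl x y z : join (x + z) (y + z) = join x y + z.
Proof.
apply: le_anti; first by apply: join_le; apply: lerD2r; rewrite ?join_gel ?join_ger.
rewrite -[join (x + z) _](subrK z); apply: lerD2r; apply: join_le.
  by have := lerD2r (- z) (join_gel (x + z) (y + z)); rewrite addrK.
by have := lerD2r (- z) (join_ger (x + z) (y + z)); rewrite addrK.
Qed.

Lemma meet_lel x y : le (meet x y) x.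
Proof. by have := lerN2 (join_gel (- x) (- y)); rewrite opprK. Qed.
Lemma meet_ler x y : le (meet x y) y.
Proof. by have := lerN2 (join_ger (- x) (- y)); rewrite opprK. Qed.
Lemma le_meet x y z : le z x -> le z y -> le z (meet x y).
Proof.
by move=> hx hy; have := lerN2 (join_le (lerN2 hx) (lerN2 hy)); rewrite opprK.
Qed.

Lemma meetC x y : meet x y = meet y x.
Proof. by rewrite /Defs.meet joinC. Qed.

Lemma meetxx x : meet x x = x.
Proof. by rewrite /Defs.meet join_idPr ?opprK. Qed.

Lemma join_add_meet x y : join x y + meet x y = x + y.
Proof.
apply: (@addrI _ (join (- x) (- y))); rewrite /Defs.meet addrCA subrr addr0.
by rewrite -joinDl addKr [- y + _]addrC addrK joinC.
Qed.

Definition pos_part x := join x 0.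
Definition neg_part x := join (- x) 0.

Lemma pos_part_ge0 x : le 0 (pos_part x). Proof. exact: join_ger. Qed.
Lemma neg_part_ge0 x : le 0 (neg_part x). Proof. exact: join_ger. Qed.

Lemma neg_partE x : neg_part x = pos_part x - x.
Proof. by rewrite /neg_part /pos_part -joinDl subrr add0r joinC. Qed.

Lemma pos_partBneg_part x : pos_part x - neg_part x = x.
Proof. by rewrite neg_partE opprB addrC subrK. Qed.

Lemma pos_part_orth_neg_part x : pos_part x ⊥ neg_part x.
Proof.
apply: (@addrI _ (join (pos_part x) (neg_part x))).
rewrite join_add_meet addr0 neg_partE.
suff -> : join (pos_part x) (pos_part x - x) = join x 0 + (pos_part x - x) by [].
by rewrite -joinDl [x + _]addrC subrK add0r.
Qed.

Lemma absv_ge0 x : le 0 (absv x).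
Proof.
have h2 : le 0 (absv x + absv x).
  by have := lerD (join_gel x (- x)) (join_ger x (- x)); rewrite subrr.
have half_ge0 : (0 : R) <= 2^-1 by rewrite invr_ge0 ler0n.
have := lerZ2l half_ge0 h2.
by rewrite scaler0 -mulr2n -scaler_nat scalerA mulVf ?scale1r ?pnatr_eq0.
Qed.

Lemma absvE x : absv x = pos_part x + neg_part x.
Proof.
have <- : join (pos_part x) (neg_part x) = pos_part x + neg_part x.
  by rewrite -join_add_meet pos_part_orth_neg_part addr0.
apply: le_anti; apply: join_le.
- exact: le_trans (join_gel x 0) (join_gel _ _).
- exact: le_trans (join_gel (- x) 0) (join_ger _ _).
- by apply: join_le; [apply: join_gel | apply: absv_ge0].
- by apply: join_le; [apply: join_ger | apply: absv_ge0].
Qed.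

Lemma ger0_absv x : le 0 x -> absv x = x.
Proof.
move=> hx; rewrite /Defs.absv joinC join_idPr //.
by apply: (le_trans _ hx); rewrite -oppr0; apply: lerN2.
Qed.

Lemma absvN x : absv (- x) = absv x.
Proof. by rewrite /Defs.absv opprK joinC. Qed.

Lemma absv_eq0 x : absv x = 0 -> x = 0.
Proof.
move=> hx; apply: le_anti; first by rewrite -hx; apply: join_gel.
have := lerN2 (join_ger x (- x)); change (join x (- x) = 0) in hx.
by rewrite hx oppr0 opprK.
Qed.

Lemma orthDl x y z : le 0 x -> le 0 y -> le 0 z -> x ⊥ z -> y ⊥ z -> x + y ⊥ z.
Proof.
move=> hx hy hz hxz hyz; set t := meet (x + y) z.
have t_ge0 : le 0 t by apply: le_meet => //; apply: addr_ge0.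
have tBx_le_y : le (t - x) y.
  by have := lerD2r (- x) (meet_lel (x + y) z); rewrite addrAC subrr add0r.
have tBx_le_z : le (t - x) z.
  by have := lerD (meet_ler (x + y) z) (lerN2 hx); rewrite oppr0 addr0.
have t_le_x : le t x.
  by have := lerD2r x (le_meet tBx_le_y tBx_le_z); rewrite hyz subrK add0r.
by apply: le_anti => //; rewrite -hxz; apply: le_meet => //; apply: meet_ler.
Qed.

Lemma absvB_orth x y : le 0 x -> le 0 y -> x ⊥ y -> absv (x - y) = x + y.
Proof.
move=> hx hy hxy.
have pos_partB : pos_part (x - y) = x.
  by rewrite /pos_part -(subrr y) joinDl -[join x y]addr0 -hxy join_add_meet addrK.
by rewrite absvE neg_partE pos_partB opprB [x + (y - x)]addrC subrK.
Qed.

Hypothesis mul_ge0 : forall x y, le 0 x -> le 0 y -> le 0 (mul x y).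
Hypothesis mul_orth :
  forall x y z, x ⊥ y -> le 0 z -> mul x z ⊥ y /\ mul z x ⊥ y.

Lemma orth_mulr x y z w : x ⊥ y -> le 0 z -> le 0 w -> mul x z ⊥ mul y w.
Proof.
move=> hxy hz hw; have [hxzy _] := mul_orth hxy hz.
by rewrite meetC; have [] := mul_orth (etrans (meetC _ _) hxzy) hw.
Qed.

Lemma orth_mull x y z w : x ⊥ y -> le 0 z -> le 0 w -> mul z x ⊥ mul w y.
Proof.
move=> hxy hz hw; have [_ hzxy] := mul_orth hxy hz.
by rewrite meetC; have [] := mul_orth (etrans (meetC _ _) hzxy) hw.
Qed.

Lemma orth_mul_eq0 x y : x ⊥ y -> le 0 x -> le 0 y -> mul x y = 0.
Proof.
move=> hxy hx hy; have [hxyy _] := mul_orth hxy hy.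
have [_ ] := mul_orth (etrans (meetC _ _) hxyy) hx.
by rewrite meetxx.
Qed.

Lemma absvM x y : absv (mul x y) = mul (absv x) (absv y).
Proof.
have [px nx] := (pos_part_ge0 x, neg_part_ge0 x).
have [py ny] := (pos_part_ge0 y, neg_part_ge0 y).
have [ox oy] := (pos_part_orth_neg_part x, pos_part_orth_neg_part y).
have oxC : neg_part x ⊥ pos_part x by rewrite meetC.
have oyC : neg_part y ⊥ pos_part y by rewrite meetC.
rewrite -{1}(pos_partBneg_part x) -{1}(pos_partBneg_part y) mulBl !mulBr.
rewrite opprB addrACA -opprD absvB_orth; last 3 first.
- by apply: addr_ge0; apply: mul_ge0.
- by apply: addr_ge0; apply: mul_ge0.
- rewrite meetC; apply: orthDl; rewrite ?addr_ge0 ?mul_ge0 //;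
    rewrite meetC; apply: orthDl; rewrite ?mul_ge0 //.
  + exact: orth_mull oy _ _.
  + exact: orth_mulr oxC _ _.
  + exact: orth_mulr ox _ _.
  + exact: orth_mull oyC _ _.
by rewrite !absvE mulDl !mulDr [mul (neg_part x) _ + _]addrC addrACA.
Qed.

Lemma sqr_ge0 x : le 0 (mul x x).
Proof.
have [px nx] := (pos_part_ge0 x, neg_part_ge0 x).
have ox := pos_part_orth_neg_part x.
have oxC : neg_part x ⊥ pos_part x by rewrite meetC.
rewrite -(pos_partBneg_part x) mulBl !mulBr (orth_mul_eq0 ox) // (orth_mul_eq0 oxC) //.
by rewrite subr0 sub0r opprK; apply: addr_ge0; apply: mul_ge0.
Qed.

Variable e : A.
Hypothesis mulA : forall x y z, mul x (mul y z) = mul (mul x y) z.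
Hypothesis mul_unit : is_mul_unit mul e.

Lemma mul_unitl x : mul e x = x. Proof. by case: (mul_unit x). Qed.
Lemma mul_unitr x : mul x e = x. Proof. by case: (mul_unit x). Qed.

Lemma quasi_inverseE a b : a + b = mul a b <-> mul (e - a) (e - b) = e.
Proof.
rewrite mulBl !mulBr !mul_unitl mul_unitr.
have -> : e - b - (a - mul a b) = e + (mul a b - (a + b)).
  by rewrite opprB addrAC -addrA opprD [mul a b + (_ + _)]addrA.
split=> [<- | h]; first by rewrite subrr addr0.
by apply/eqP; rewrite eq_sym -subr_eq0; apply/eqP/(@addrI _ e); rewrite addr0.
Qed.

Lemma quasi_invertibleP a : quasi_invertible mul a <-> exists y, mul (e - a) y = e.
Proof.
split=> [[b /quasi_inverseE hb] | [y hy]]; first by exists (e - b).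
by exists (e - y); apply/quasi_inverseE; rewrite subKr.
Qed.

Lemma absv_rinv x s : mul (absv x) s = e -> mul x (mul x (mul s s)) = e.
Proof.
move=> hs; have sqr_absv : mul x x = mul (absv x) (absv x).
  by rewrite -absvM ger0_absv ?sqr_ge0.
by rewrite mulA sqr_absv -mulA (mulA (absv x) s s) hs mul_unitl hs.
Qed.

Lemma ge_unit_rinv_linv a r : le e a -> mul a r = e -> mul r a = e.
Proof.
move=> /subr_ge0 aBe_ge0 har; set q := e - mul r a.
have q_idem : mul q q = q.
  have ra_idem : mul (mul r a) (mul r a) = mul r a.
    by rewrite mulA -(mulA r a r) har mul_unitr.
  by rewrite mulBl !mulBr !mul_unitl mul_unitr ra_idem subrr subr0.
have aq : mul a q = 0 by rewrite mulBr mul_unitr mulA har mul_unitl subrr.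
have : le 0 (mul (a - e) q) by apply: mul_ge0; rewrite // -q_idem sqr_ge0.
rewrite mulBl aq mul_unitl sub0r => /lerN2; rewrite opprK oppr0 => q_le0.
have q0 : q = 0 by apply: le_anti => //; rewrite -q_idem sqr_ge0.
by apply/eqP; rewrite eq_sym -subr_eq0; apply/eqP.
Qed.

Lemma mul_neg_part_eq0 p u : le 0 p -> le 0 (mul p u) -> mul p (neg_part u) = 0.
Proof.
move=> hp; rewrite -{1}(pos_partBneg_part u) mulBr => /subr_ge0 hle.
have hge0 : le 0 (mul p (neg_part u)) by rewrite mul_ge0 ?neg_part_ge0.
apply: le_anti => //; rewrite -(orth_mull (pos_part_orth_neg_part u) hp hp).
by apply: le_meet.
Qed.

Lemma bounded_qinv_closed_inv_closed :
  bounded_quasi_inversion_closed mul le join -> bounded_inversion_closed mul le e.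
Proof.
move=> qinv_closed a hea; set t := a - e.
have t_ge0 : le 0 t by apply/subr_ge0.
have c_bounded : le (absv (e - a)) (absv (mul (e - a) (e - a) - (e - a))).
  have -> : e - a = - t by rewrite opprB.
  have tt_ge0 : le 0 (mul t t) := mul_ge0 t_ge0 t_ge0.
  rewrite mulNl mulNr !opprK absvN !ger0_absv //; last exact: addr_ge0.
  by rewrite -{1}[t]add0r; apply: lerD2r.
have [r] := (quasi_invertibleP (e - a)).1 (qinv_closed _ c_bounded).
rewrite subKr => har.
by exists r; split; last exact: ge_unit_rinv_linv.
Qed.

Hypothesis mul_semiprime : semiprime mul.

Lemma neg_part_eq0 u : mul u (neg_part u) = 0 -> neg_part u = 0.
Proof.
rewrite -{1}(pos_partBneg_part u) mulBl.
rewrite (orth_mul_eq0 (pos_part_orth_neg_part u)) ?pos_part_ge0 ?neg_part_ge0 //.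
rewrite sub0r => /eqP; rewrite oppr_eq0 => /eqP sqr0.
by apply: mul_semiprime; exists 1%N.
Qed.

Lemma unit_le_absv_subr a : le (absv a) (absv (mul a a - a)) -> le e (absv (e - a)).
Proof.
set x := e - a; set u := absv x - e; set w := neg_part u.
have w_ge0 : le 0 w := neg_part_ge0 u.
have -> : mul a a - a = - mul a x by rewrite /x mulBr mul_unitr opprB.
rewrite absvN absvM => /subr_ge0; rewrite -{2}[absv a]mul_unitr -mulBr => hau.
have aw : mul a w = 0.
  apply: absv_eq0; rewrite absvM (ger0_absv w_ge0).
  exact: mul_neg_part_eq0 (absv_ge0 a) hau.
have xw : mul x w = w by rewrite mulBl aw subr0 mul_unitl.
have absxw : mul (absv x) w = w.
  by rewrite -{1}(ger0_absv w_ge0) -absvM xw ger0_absv.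
have uw : mul u w = 0 by rewrite mulBl absxw mul_unitl subrr.
apply/subr_ge0; rewrite -/u -(pos_partBneg_part u) (neg_part_eq0 uw) subr0.
exact: pos_part_ge0.
Qed.

Lemma bounded_inv_closed_qinv_closed :
  bounded_inversion_closed mul le e -> bounded_quasi_inversion_closed mul le join.
Proof.
move=> inv_closed a /unit_le_absv_subr /inv_closed [s [hs _]].
by apply/quasi_invertibleP; exists (mul (e - a) (mul s s)); apply: absv_rinv.
Qed.

End FAlgebraTheory.

Theorem theorem2 (R : realType) (A : lmodType R) (mul : A -> A -> A)
    (le : rel A) (join : A -> A -> A) (e : A) :
  f_algebra mul le join -> archimedean le -> semiprime mul ->
  is_mul_unit mul e ->
  (bounded_quasi_inversion_closed mul le join <-> bounded_inversion_closed mul le e).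
Proof.
move=> [[mulA mul_linearl mul_linearr] [[lexx le_anti le_trans lerD2r lerZ2l] joinP]
  mul_ge0 mul_orth] _ mul_semiprime mul_unit.
split; first exact: bounded_qinv_closed_inv_closed.
exact: bounded_inv_closed_qinv_closed.
Qed.
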